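(* Let $q$ be a power of an odd prime $p$, let $b\in\mathbb{F}_q$ with $b\ne0$, and let $n\ge2$ be an integer. Let $r\ge0$ be such that $p^r$ divides $n+1$ but $p^{r+1}$ does not, and let $m\ge0$ be defined by $n+1=p^r(m+1)$. Assume $r\ge1$, and assume: if $q\equiv1\pmod4$ then $\gcd(m+1,(q^2-1)/2)=1$; if $q\equiv3\pmod4$ then $\gcd(m+1,(q^4-1)/2)$ divides $(q-1)/2$. Let $\mu\in\mathbb{F}_{q^2}$ with $\mu^2=-1$. Then $\hat C_n(a,b)$ is LCD for every $a\in\mathbb{F}_q\setminus\{\mu+2b,\,\mu-2b,\,-\mu+2b,\,-\mu-2b\}$.
   Context: For $a,b\in\mathbb{F}_q$ and $n\ge 2$, $\hat T_n(a,b)$ denotes the $n\times n$ symmetric tridiagonal Toeplitz matrix over $\mathbb{F}_q$ with all diagonal entries equal to $a$, all entries on the first super- and sub-diagonals equal to $b$, and all other entries $0$. $\hat C_n(a,b)$ is the $[2n,n]$ linear code over $\mathbb{F}_q$ with generator matrix $[I_n\mid \hat T_n(a,b)]$. A linear code $C$ is LCD if $C\cap C^\perp=\{0\}$ (Euclidean dual). *)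

From HB Require Import structures.
From mathcomp Require Import all_boot all_order all_algebra all_field.
Set Implicit Arguments. Unset Strict Implicit. Unset Printing Implicit Defensive.
Import GRing.Theory.
Local Open Scope ring_scope.

Definition That (F : fieldType) (n : nat) (a b : F) : 'M[F]_n :=
  \matrix_(i < n, j < n)
    if i == j then a
    else if ((i.+1 == j)%N || (j.+1 == i)%N) then b else 0.

Definition Chat_gen (F : fieldType) (n : nat) (a b : F) : 'M[F]_(n, n + n) :=
  row_mx 1%:M (That n a b).

Definition in_code (F : fieldType) (k N : nat) (G : 'M[F]_(k, N)) (x : 'rV[F]_N) : Prop :=
  (x <= G)%MS.

Definition in_dual (F : fieldType) (k N : nat) (G : 'M[F]_(k, N)) (x : 'rV[F]_N) : Prop :=
  forall c : 'rV[F]_N, in_code G c -> x *m c^T = 0.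

Definition is_LCD (F : fieldType) (k N : nat) (G : 'M[F]_(k, N)) : Prop :=
  forall x : 'rV[F]_N, in_code G x -> in_dual G x -> x = 0.

From HB Require Import structures.
From mathcomp Require Import all_boot all_order all_algebra all_field.
From mathcomp Require abelian.
From mathcomp Require Import zify ring.
Import GRing.Theory.
Local Open Scope ring_scope.
Set Implicit Arguments. Unset Strict Implicit.

(* The generator matrix of hat C_n(a,b) is [I | T] with T = hat T_n(a,b)
   symmetric, so the code is LCD as soon as I + T^2 has trivial left kernel.
   Over F_{q^2}, where mu^2 = -1, this matrix factors as
   (T - mu I)(T + mu I) = hat T_n(a - mu, b) hat T_n(a + mu, b), and the left
   kernel of a tridiagonal Toeplitz matrix hat T_n(x, c) is trivial whenever
   U_{n+1}(-x/c) != 0, where U (called [cheb]) is the Chebyshev-type sequence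
   U_0 = 0, U_1 = 1, U_{k+2} = z U_{k+1} - U_k: a left kernel vector is
   determined by its first coordinate through exactly this recurrence.
   The heart of the proof shows U_{n+1}(z) != 0 for z = -(a -+ mu)/b.  If
   Z = y + 1/y (y in an algebraic closure) satisfies U_{p^r (m+1)}(Z) = 0 and
   Z != +-2, then y^{2(m+1)} = 1 but y^2 != 1; on the other hand y lies in
   F_{q^2} (resp. F_{q^4}) when Z lies in F_q (resp. F_{q^2}), and the gcd
   hypotheses on m+1 then force y^2 = 1 when q = 1 mod 4, and force z to be
   fixed by the q-Frobenius when q = 3 mod 4, which is impossible since the
   Frobenius sends mu to -mu in that case. *)

(* The Chebyshev-type sequence U_k(z), i.e. U_k(z) = Chebyshev U_{k-1}(z/2). *)
Fixpoint cheb (R : fieldType) (z : R) (k : nat) : R :=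
  match k with
  | 0 => 0
  | 1 => 1
  | (S k1 as k2).+1 => z * cheb z k2 - cheb z k1
  end.

Lemma chebSS (R : fieldType) (z : R) k : cheb z k.+2 = z * cheb z k.+1 - cheb z k.
Proof. by []. Qed.

Lemma cheb_map (R S : fieldType) (g : {rmorphism R -> S}) (z : R) k :
  g (cheb z k) = cheb (g z) k.
Proof.
suff [] : g (cheb z k) = cheb (g z) k /\ g (cheb z k.+1) = cheb (g z) k.+1 by [].
elim: k => [|k [IHk IHk1]]; first by rewrite /= rmorph0 rmorph1.
by split=> //; rewrite !chebSS rmorphB rmorphM IHk IHk1.
Qed.

Lemma cheb_sum_roots (R : fieldType) (y y' : R) k : y * y' = 1 ->
  cheb (y + y') k * (y - y') = y ^+ k - y' ^+ k.
Proof.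
move=> yy'; suff [] : cheb (y + y') k * (y - y') = y ^+ k - y' ^+ k /\
    cheb (y + y') k.+1 * (y - y') = y ^+ k.+1 - y' ^+ k.+1 by [].
elim: k => [|k [IHk IHk1]]; first by rewrite /= mul0r mul1r !expr0 expr1 subrr.
split=> //; rewrite chebSS mulrBl -mulrA IHk1 IHk; apply/eqP; rewrite -subr_eq0.
have -> : (y + y') * (y ^+ k.+1 - y' ^+ k.+1) - (y ^+ k - y' ^+ k) - (y ^+ k.+2 - y' ^+ k.+2)
    = (y * y' - 1) * (y ^+ k - y' ^+ k) by rewrite !exprS; ring.
by rewrite yy' subrr mul0r.
Qed.

Section TridiagonalKernel.
Variables (R : fieldType) (n : nat).

(* The coordinates of a row vector w as a sequence V with V_0 = 0,
   V_{i+1} = w_i, and V_k = 0 beyond n; it turns the columns of w T into a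
   uniform three-term relation. *)
Definition padded (w : 'rV[R]_n) (k : nat) : R :=
  \sum_(i < n) w 0 i * (i.+1 == k)%:R.

Lemma padded0 (w : 'rV[R]_n) : padded w 0 = 0.
Proof. by rewrite /padded big1 // => i _; rewrite mulr0. Qed.

Lemma paddedS (w : 'rV[R]_n) (i : 'I_n) : padded w i.+1 = w 0 i.
Proof.
rewrite /padded (bigD1 i) //= eqxx mulr1 big1 ?addr0 // => j ji.
by rewrite (_ : (j.+1 == i.+1) = false) ?mulr0 //; apply/negbTE.
Qed.

Lemma padded_out (w : 'rV[R]_n) k : (n < k)%N -> padded w k = 0.
Proof.
move=> nk; rewrite /padded big1 // => i _.
by rewrite (_ : (i.+1 == k) = false) ?mulr0 //; apply/eqP; have := ltn_ord i; lia.
Qed.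

(* The entries of hat T_n(x,c), written with the shifted indices of [padded]. *)
Lemma That_entry (x c : R) (i j : 'I_n) : That n x c i j =
  x * (i.+1 == j.+1)%:R + c * (i.+1 == j)%:R + c * (i.+1 == j.+2)%:R.
Proof.
rewrite mxE -[i == j]/(i == j :> nat) !eqSS [(j.+1 == (i : nat))]eq_sym.
have [->|ij] := eqVneq (i : nat) j.
  have [jSj j2j] : (j.+1 == j :> nat) = false /\ (j == j.+1 :> nat) = false.
    by split; apply/eqP; lia.
  by rewrite jSj j2j /= mulr1 !mulr0 !addr0.
have [<-|iSj] := eqVneq i.+1 j; last by case: eqP; rewrite /= !mulr0 ?mulr1 ?add0r.
have iSSi : (i == i.+2 :> nat) = false by apply/eqP; lia.
by rewrite iSSi /= mulr1 !mulr0 add0r addr0.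
Qed.

Lemma mul_That_entry (w : 'rV[R]_n) (x c : R) (j : 'I_n) :
  (w *m That n x c) 0 j = c * padded w j + x * padded w j.+1 + c * padded w j.+2.
Proof.
rewrite mxE /padded !mulr_sumr -!big_split; apply: eq_bigr => i _ /=.
by rewrite That_entry; ring.
Qed.

Lemma tridiagonal_recurrence (V : nat -> R) (x c : R) : c != 0 -> V 0 = 0 ->
  (forall j, (j < n)%N -> c * V j + x * V j.+1 + c * V j.+2 = 0) ->
  forall k, (k <= n.+1)%N -> V k = V 1 * cheb (- x / c) k.
Proof.
move=> c0 V0 eqV.
have pair k : (k <= n)%N ->
    V k = V 1 * cheb (- x / c) k /\ V k.+1 = V 1 * cheb (- x / c) k.+1.
  elim: k => [|k IHk] kn; first by rewrite V0 /= mulr0 mulr1.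
  have [IHk0 IHk1] := IHk (ltnW kn); split=> //.
  apply: (mulfI c0); have := eqV k kn; rewrite chebSS IHk0 IHk1 => /eqP.
  by rewrite addrC addr_eq0 => /eqP ->; field.
by case=> [|k] kn; [case: (pair 0%N) | case: (pair k)].
Qed.

(* hat T_n(x,c) has trivial left kernel when c != 0 and U_{n+1}(-x/c) != 0:
   V_{n+1} = 0 forces V_1 = 0, hence V = 0. *)
Lemma That_left_kernel (x c : R) (w : 'rV[R]_n) : c != 0 ->
  cheb (- x / c) n.+1 != 0 -> w *m That n x c = 0 -> w = 0.
Proof.
move=> c0 ch0 wT0.
have eqV j : (j < n)%N ->
    c * padded w j + x * padded w j.+1 + c * padded w j.+2 = 0.
  by move=> jn; rewrite -(mul_That_entry w x c (Ordinal jn)) wT0 mxE.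
have recV := tridiagonal_recurrence c0 (padded0 w) eqV.
have /eqP : padded w 1 * cheb (- x / c) n.+1 = 0 by rewrite -recV // padded_out.
rewrite mulf_eq0 (negbTE ch0) orbF => /eqP w1.
apply/rowP => i; rewrite -paddedS recV ?w1 ?mul0r ?mxE //.
by rewrite ltnS ltnW.
Qed.

End TridiagonalKernel.

Lemma That_tr (R : fieldType) n (a b : R) : (That n a b)^T = That n a b.
Proof. by apply/matrixP => i j; rewrite !mxE [j == i]eq_sym orbC. Qed.

Lemma That_map (R S : fieldType) (f : {rmorphism R -> S}) n (a b : R) :
  map_mx f (That n a b) = That n (f a) (f b).
Proof.
apply/matrixP => i j; rewrite !mxE; case: (i == j) => //.
by case: (_ || _); rewrite ?rmorph0.
Qed.

Lemma That_subr (R : fieldType) n (a b e : R) : That n a b - e%:M = That n (a - e) b.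
Proof.
apply/matrixP => i j; rewrite !mxE; case: (i == j) => /=; first by rewrite mulr1n.
by rewrite mulr0n subr0.
Qed.

(* For symmetric T, the code generated by [I | T] is LCD when I + T^2 has
   trivial left kernel: a codeword u [I | T] in the dual satisfies
   u (I + T^2) = 0. *)
Lemma LCD_of_symmetric (R : fieldType) n (T : 'M[R]_n) : T^T = T ->
  (forall u : 'rV_n, u *m (1%:M + T *m T) = 0 -> u = 0) ->
  is_LCD (row_mx 1%:M T).
Proof.
move=> symT ker1TT x /submxP [u ->] x_dual.
have : u *m row_mx 1%:M T *m (row_mx 1%:M T)^T = 0.
  apply/rowP => i; have := x_dual _ (row_sub i (row_mx 1%:M T)).
  by rewrite tr_row colE mulmxA -colE => /colP /(_ 0); rewrite !mxE.
rewrite tr_row_mx -mulmxA mul_row_col trmx1 mul1mx symT => /ker1TT ->.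
by rewrite mul0mx.
Qed.

Lemma add1_sqr_factor (R : comNzRingType) n (T : 'M[R]_n) (mu : R) : mu ^+ 2 = -1 ->
  1%:M + T *m T = (T - mu%:M) *m (T - (- mu)%:M).
Proof.
move=> mu2; rewrite mulmxBl !mulmxBr mul_mx_scalar mul_scalar_mx -scalar_mxM.
by rewrite mulrN -expr2 mu2 scaleNr opprK opprB addrA addrAC addrK addrC opprK.
Qed.

Lemma pchar_nat (R : nzRingType) p k : p \in [pchar R] -> p.-nat k -> [pchar R].-nat k.
Proof. by move=> pR; rewrite (eq_pnat _ (pcharf_eq pR)). Qed.

Lemma card_pnat (F : finFieldType) p : p \in [pchar F] -> p.-nat #|F|.
Proof.
move=> pF; have := abelian.abelem_pgroup (abelian.fin_ring_pchar_abelem pF).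
by rewrite /pgroup.pgroup cardsT.
Qed.

Lemma odd_pnat p k : odd p -> p.-nat k -> odd k.
Proof. by move=> op pk; rewrite -(part_pnat_id pk) p_part oddX op orbT. Qed.

(* In characteristic p, x^(p^k) = 1 implies x = 1, as (x - 1)^(p^k) = x^(p^k) - 1. *)
Lemma pchar_exp_eq1 (R : fieldType) Q (x : R) : [pchar R].-nat Q -> x ^+ Q = 1 -> x = 1.
Proof.
move=> RQ xQ; apply/eqP; rewrite -subr_eq0.
have : (x - 1) ^+ Q == 0 by rewrite exprDn_pchar // exprNn_pchar // expr1n xQ subrr.
by rewrite expf_eq0 => /andP [].
Qed.

Lemma exp_gcdn_eq1 (R : pzRingType) (x : R) k l : (0 < k)%N ->
  x ^+ k = 1 -> x ^+ l = 1 -> x ^+ gcdn k l = 1.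
Proof.
move=> k0 xk xl; have [u _ /dvdnP [v uk]] := Bezoutl l k0.
have : x ^+ (gcdn k l + u * l) = 1 by rewrite uk mulnC exprM xk expr1n.
by rewrite exprD mulnC exprM xl expr1n mulr1.
Qed.

Lemma exp_sqrtN1 (R : pzRingType) (eps : R) q : eps ^+ 2 = -1 -> eps ^+ q = eps ^+ (q %% 4).
Proof.
move=> eps2; rewrite {1}(divn_eq q 4) exprD mulnC exprM.
by rewrite (_ : eps ^+ 4 = 1) ?expr1n ?mul1r // (exprM _ 2 2) eps2 sqrrN expr1n.
Qed.

Lemma odd_mod4 q : odd q -> (q %% 4 = 1 \/ q %% 4 = 3)%N.
Proof. lia. Qed.

Lemma pchar_two_neq0 (R : nzRingType) p : p \in [pchar R] -> odd p -> 2%:R != 0 :> R.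
Proof.
move=> pR op; rewrite -(dvdn_pcharf pR); apply/negP => /(@dvdn_leq _ 2 isT).
by move: (prime_gt1 (pcharf_prime pR)) op; lia.
Qed.

Lemma sqr_eq1_sum (R : idomainType) (y y' : R) : y * y' = 1 -> y ^+ 2 = 1 ->
  y + y' = 2 \/ y + y' = -2.
Proof.
move=> yy' /eqP; rewrite sqrf_eq1 => /orP [] /eqP y1; move: yy'; rewrite y1.
  by rewrite mul1r => ->; left.
by rewrite mulN1r => /eqP; rewrite eqr_oppLR => /eqP ->; right; rewrite -opprD.
Qed.

(* If Z = y + y' with y y' = 1 is fixed by x |-> x^Q (Q a power of the
   characteristic), then y^Q is a root of X^2 - Z X + 1, i.e. y^Q is y or y',
   and in both cases y^(Q^2) = y. *)
Lemma frobenius_quad_root (R : fieldType) Q (y y' : R) : [pchar R].-nat Q ->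
  y * y' = 1 -> (y + y') ^+ Q = y + y' -> y ^+ (Q * Q) = y.
Proof.
move=> RQ yy' sumQ; set w := y ^+ Q; set w' := y' ^+ Q.
have ww' : w * w' = 1 by rewrite -exprMn yy' expr1n.
have sum_w : w + w' = y + y' by rewrite -exprDn_pchar.
have /eqP : (w - y) * (w - y') = 0.
  have -> : (w - y) * (w - y') = w * (w - (y + y')) + y * y' by ring.
  by rewrite -sum_w yy' -ww'; ring.
rewrite exprM -/w mulf_eq0 !subr_eq0 => /orP [] /eqP wE; first by rewrite wE -/w wE.
by rewrite wE -/w' -[w'](addKr w) sum_w wE addrC addrK.
Qed.

Lemma quad_root_order (R : fieldType) Q m (y y' : R) : [pchar R].-nat Q -> odd Q ->
  y * y' = 1 -> (y + y') ^+ Q = y + y' -> y ^+ (2 * m.+1) = 1 ->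
  y ^+ (2 * gcdn m.+1 ((Q ^ 2 - 1) %/ 2)) = 1.
Proof.
move=> RQ oQ yy' sumQ ym.
have y0 : y != 0 by apply: contra_eq_neq yy' => ->; rewrite mul0r eq_sym oner_neq0.
have yQ : y ^+ (Q ^ 2 - 1) = 1.
  have Q0 : (0 < Q ^ 2)%N by rewrite expn_gt0; case/andP: RQ => ->.
  apply: (mulIf y0); rewrite mul1r -exprSr subn1 prednK // -mulnn.
  exact: frobenius_quad_root RQ yy' sumQ.
have QE : (Q ^ 2 - 1 = 2 * ((Q ^ 2 - 1) %/ 2))%N.
  have : odd (Q ^ 2) by rewrite oddX oQ orbT.
  lia.
by rewrite muln_gcdr -QE; apply: exp_gcdn_eq1.
Qed.

Section ClosedField.
Variables (K : closedFieldType) (p r m : nat) (Z : K).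
Hypotheses (pK : p \in [pchar K]) (Z2 : Z != 2) (Zm2 : Z != -2).
Hypothesis chebZ : cheb Z (p ^ r * m.+1) = 0.

(* Writing Z = y + 1/y, the Binet formula gives y^(2 p^r (m+1)) = 1, hence
   y^(2(m+1)) = 1; and y^2 != 1 because Z != +-2. *)
Lemma cheb_zero_quad_root : exists y y' : K,
  [/\ y * y' = 1, y + y' = Z, y ^+ (2 * m.+1) = 1 & y ^+ 2 != 1].
Proof.
have [y yZ] := @solve_monicpoly K 2 (nth 0 [:: -1; Z]) isT.
rewrite !big_ord_recl big_ord0 /= expr0 expr1 mulr1 addr0 mulrC addrC in yZ.
have yy' : y * (Z - y) = 1 by rewrite mulrBr -expr2 yZ; ring.
have sumZ : y + (Z - y) = Z by rewrite addrC subrK.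
exists y, (Z - y); split=> //.
  have prK : [pchar K].-nat (p ^ r)%N.
    by rewrite (pchar_nat pK) // pnatX pnat_id ?(pcharf_prime pK).
  apply: (pchar_exp_eq1 prK); rewrite -exprM mulnAC -mulnA mulnC exprM.
  have /eqP : cheb (y + (Z - y)) (p ^ r * m.+1) * (y - (Z - y)) = 0.
    by rewrite sumZ chebZ mul0r.
  rewrite cheb_sum_roots // subr_eq0 => /eqP yN.
  by rewrite expr2 {2}yN -exprMn yy' expr1n.
apply/negP => /eqP y2; have [] := sqr_eq1_sum yy' y2; rewrite sumZ => /eqP.
  by rewrite (negbTE Z2).
by rewrite (negbTE Zm2).
Qed.

Lemma cheb_zero_gcd Q : p.-nat Q -> odd Q -> Z ^+ Q = Z ->
  gcdn m.+1 ((Q ^ 2 - 1) %/ 2) != 1%N.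
Proof.
move=> pQ oQ ZQ; have [y [y' [yy' sumZ ym y2]]] := cheb_zero_quad_root.
apply: contra y2 => /eqP g1; apply/eqP.
have := quad_root_order (pchar_nat pK pQ) oQ yy' _ ym.
by rewrite g1 muln1 sumZ; apply.
Qed.

(* If Z lies in F_{Q^2} and gcd(m+1, (Q^4-1)/2) divides (Q-1)/2, then
   y^(Q-1) = 1, so y and 1/y, hence Z, lie in F_Q. *)
Lemma cheb_zero_descent Q : p.-nat Q -> odd Q -> Z ^+ (Q ^ 2) = Z ->
  (gcdn m.+1 ((Q ^ 4 - 1) %/ 2) %| (Q - 1) %/ 2)%N -> Z ^+ Q = Z.
Proof.
move=> pQ oQ ZQ2 gdvd; have [y [y' [yy' sumZ ym _]]] := cheb_zero_quad_root.
have pQ2 : [pchar K].-nat (Q ^ 2)%N by rewrite pnatX (pchar_nat pK pQ).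
have oQ2 : odd (Q ^ 2)%N by rewrite oddX oQ orbT.
have := quad_root_order pQ2 oQ2 yy' _ ym; rewrite -expnM sumZ => /(_ ZQ2) yg.
have yQ1 : y ^+ (Q - 1) = 1.
  have : (2 * gcdn m.+1 ((Q ^ 4 - 1) %/ 2) %| Q - 1)%N.
    by rewrite (_ : (Q - 1 = 2 * ((Q - 1) %/ 2))%N) ?dvdn_pmul2l //; lia.
  by case/dvdnP => k ->; rewrite mulnC exprM yg expr1n.
have Q0 : (0 < Q)%N by case/andP: pQ.
have yQ : y ^+ Q = y by rewrite -(subnK Q0) exprD yQ1 mul1r expr1.
have y0 : y != 0 by apply: contra_eq_neq yy' => ->; rewrite mul0r eq_sym oner_neq0.
have y'Q : y' ^+ Q = y' by apply: (mulfI y0); rewrite yy' -{1}yQ -exprMn yy' expr1n.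
by rewrite -sumZ exprDn_pchar ?yQ ?y'Q // (pchar_nat pK pQ).
Qed.

End ClosedField.

Lemma shift_neq2 (R : fieldType) (x e c : R) : c != 0 ->
  x != e + 2 * c -> x != e - 2 * c -> - (x - e) / c != 2 /\ - (x - e) / c != -2.
Proof.
move=> c0 x1 x2; split.
  apply: contraNneq x2 => /(congr1 (fun t => t * c)); rewrite mulfVK // => e2.
  by rewrite -e2 opprK addrC subrK.
apply: contraNneq x1 => /(congr1 (fun t => t * c)); rewrite mulfVK // mulNr => /oppr_inj e2.
by rewrite -e2 addrC subrK.
Qed.

Lemma frobenius_fixed_shift (F L : finFieldType) (f : {rmorphism F -> L}) p (x c : F)
  (e : L) : p \in [pchar F] -> c != 0 ->
  (- (f x - e) / f c) ^+ #|F| = - (f x - e) / f c <-> e ^+ #|F| = e.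
Proof.
move=> pF c0; have fc0 : f c != 0 by rewrite fmorph_eq0.
have pq : [pchar L].-nat #|F| := pchar_nat (rmorph_pchar f pF) (card_pnat pF).
have fq t : f t ^+ #|F| = f t by rewrite -rmorphXn expf_card.
rewrite expr_div_n exprNn_pchar // exprDn_pchar // exprNn_pchar // !fq.
by split=> [/(mulIf (invr_neq0 fc0))/oppr_inj/subrI | ->].
Qed.

(* Z is the image of this point in an algebraic closure of
   F_{q^2}; q = 1 mod 4 gives eps^q = eps, so Z lies in F_q, and q = 3 mod 4
   gives eps^q = -eps, so Z lies in F_{q^2} but not in F_q. *)
Lemma cheb_nonvanishing (F L : finFieldType) (f : {rmorphism F -> L}) p r m
  (a b : F) (eps : L) : odd p -> p \in [pchar F] -> b != 0 ->
  (#|F| %% 4 = 1 -> gcdn m.+1 ((#|F| ^ 2 - 1) %/ 2) = 1)%N ->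
  (#|F| %% 4 = 3 -> gcdn m.+1 ((#|F| ^ 4 - 1) %/ 2) %| (#|F| - 1) %/ 2)%N ->
  #|L| = (#|F| ^ 2)%N -> eps ^+ 2 = -1 ->
  f a != eps + 2 * f b -> f a != eps - 2 * f b ->
  cheb (- (f a - eps) / f b) (p ^ r * m.+1) != 0.
Proof.
move=> op pF b0 gcd1 gcd3 cardL eps2 a1 a2.
set q := #|F|; set z := - (f a - eps) / f b.
have pq : p.-nat q := card_pnat pF.
have oq : odd q := odd_pnat op pq.
have pL : p \in [pchar L] := rmorph_pchar f pF.
have [K [g _]] := countable_algebraic_closure L.
have pK : p \in [pchar K] := rmorph_pchar g pL.
have fb0 : f b != 0 by rewrite fmorph_eq0.
have [z2 zm2] := shift_neq2 fb0 a1 a2.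
have Z2 : g z != 2 by rewrite -(rmorph_nat g) (inj_eq (fmorph_inj g)).
have Zm2 : g z != -2 by rewrite -(rmorph_nat g) -rmorphN (inj_eq (fmorph_inj g)).
have zfix : z ^+ q = z <-> eps ^+ q = eps := frobenius_fixed_shift f a eps pF b0.
apply/eqP => chz; have chZ : cheb (g z) (p ^ r * m.+1) = 0 by rewrite -cheb_map chz rmorph0.
have ZE k : (g z ^+ k == g z) = (z ^+ k == z) by rewrite -rmorphXn (inj_eq (fmorph_inj g)).
have [q1|q3] := odd_mod4 oq.
  have /zfix/eqP : eps ^+ q = eps by rewrite (exp_sqrtN1 _ eps2) q1.
  rewrite -ZE => /eqP ZQ.
  by have := cheb_zero_gcd pK Z2 Zm2 chZ pq oq ZQ; rewrite gcd1.
have ZQ2 : g z ^+ (q ^ 2) = g z by apply/eqP; rewrite ZE -cardL expf_card.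
have /eqP := cheb_zero_descent pK Z2 Zm2 chZ pq oq ZQ2 (gcd3 q3).
rewrite ZE => /eqP/zfix; rewrite (exp_sqrtN1 _ eps2) q3 exprS eps2 mulrN1 => /eqP.
have eps0 : eps != 0.
  by apply: contra_eq_neq eps2 => ->; rewrite expr2 mul0r eq_sym oppr_eq0 oner_neq0.
rewrite eq_sym -subr_eq0 opprK -mulr2n -mulr_natl mulf_eq0.
by rewrite (negbTE (pchar_two_neq0 pL op)) (negbTE eps0).
Qed.

Unset Implicit Arguments.

Theorem corollary2p8
  (F : finFieldType) (p : nat) (b : F) (n r m : nat)
  (L : finFieldType) (f : {rmorphism F -> L}) (mu : L) :
  prime p -> odd p -> p \in [pchar F] ->
  b != 0 ->
  (2 <= n)%N ->
  (p ^ r %| n.+1)%N -> ~~ (p ^ r.+1 %| n.+1)%N ->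
  n.+1 = (p ^ r * m.+1)%N ->
  (1 <= r)%N ->
  (#|F| %% 4 = 1 -> gcdn m.+1 ((#|F| ^ 2 - 1) %/ 2) = 1)%N ->
  (#|F| %% 4 = 3 -> gcdn m.+1 ((#|F| ^ 4 - 1) %/ 2) %| (#|F| - 1) %/ 2)%N ->
  #|L| = (#|F| ^ 2)%N ->
  mu ^+ 2 = -1 ->
  forall a : F,
    f a != mu + f (2 * b) -> f a != mu - f (2 * b) ->
    f a != - mu + f (2 * b) -> f a != - mu - f (2 * b) ->
    is_LCD (Chat_gen n a b).
Proof.
move=> _ op pF b0 _ _ _ Nm _ gcd1 gcd3 cardL mu2 a a1 a2 a3 a4.
have fb0 : f b != 0 by rewrite fmorph_eq0.
rewrite rmorphM rmorph_nat in a1 a2 a3 a4.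
have kerT e : e ^+ 2 = -1 -> f a != e + 2 * f b -> f a != e - 2 * f b ->
    forall w : 'rV_n, w *m That n (f a - e) (f b) = 0 -> w = 0.
  move=> e2 ae1 ae2 w; apply: That_left_kernel fb0 _; rewrite Nm.
  exact: cheb_nonvanishing op pF b0 gcd1 gcd3 cardL e2 ae1 ae2.
have mu2' : (- mu) ^+ 2 = -1 by rewrite sqrrN.
apply: LCD_of_symmetric (That_tr n a b) _ => u uTT.
apply: (map_mx_inj (f := f)); rewrite map_mx0.
apply: (kerT mu mu2 a1 a2); apply: (kerT (- mu) mu2' a3 a4).
rewrite -mulmxA -!That_subr -(add1_sqr_factor _ mu2) -That_map -(map_mx1 f).
by rewrite -map_mxM -map_mxD -map_mxM uTT map_mx0.
Qed.
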